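(* Let $A$ be a local commutative ring and $N$ its nilradical. Then $A$ is an fqp-ring if and only if either $A$ is a chain ring, or $A/N$ is a valuation domain and $N$ is an $A/N$-module (i.e. $N^2=0$) which is divisible and torsionfree over $A/N$.
   Context: An $A$-module $V$ is $M$-projective if the natural map $\mathrm{Hom}_A(V,M)\to\mathrm{Hom}_A(V,M/X)$ is surjective for every submodule $X$ of $M$; $V$ is quasi-projective if it is $V$-projective. A ring is an fqp-ring if every finitely generated ideal is quasi-projective. A chain ring is a ring whose ideals are totally ordered by inclusion. *)

From mathcomp Require Import all_boot all_algebra.
Set Implicit Arguments. Unset Strict Implicit. Unset Printing Implicit Defensive.
Import GRing.Theory.
Local Open Scope ring_scope.

Section Defs.
Variable A : comNzRingType.

Definition ideal (I : A -> Prop) : Prop :=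
  I 0 /\ (forall x y, I x -> I y -> I (x + y)) /\ (forall a x, I x -> I (a * x)).

Definition subset_pred (I J : A -> Prop) : Prop := forall x, I x -> J x.

Definition proper_ideal (I : A -> Prop) : Prop := ideal I /\ ~ I 1.

Definition maximal_ideal (M : A -> Prop) : Prop :=
  proper_ideal M /\
  forall J, proper_ideal J -> subset_pred M J -> subset_pred J M.

Definition local_ring : Prop :=
  exists M, maximal_ideal M /\
    forall M', maximal_ideal M' -> forall x, M' x <-> M x.

Definition fg_ideal (I : A -> Prop) : Prop :=
  exists (n : nat) (g : 'I_n -> A),
    forall x, I x <-> exists c : 'I_n -> A, x = \sum_(i < n) c i * g i.

(* An A-linear map V -> M/X is encoded by a function f : A -> A sending V into
   M that is A-linear modulo X on V (its values mod X); the natural map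
   Hom_A(V,M) -> Hom_A(V,M/X) sends g to g mod X, so surjectivity means every
   such f is congruent mod X (on V) to a genuinely A-linear g : V -> M. *)
Definition M_projective (V M : A -> Prop) : Prop :=
  forall X : A -> Prop, ideal X -> subset_pred X M ->
  forall f : A -> A,
    (forall v, V v -> M (f v)) ->
    (forall v w, V v -> V w -> X (f (v + w) - (f v + f w))) ->
    (forall a v, V v -> X (f (a * v) - a * f v)) ->
    exists g : A -> A,
      (forall v, V v -> M (g v)) /\
      (forall v w, V v -> V w -> g (v + w) = g v + g w) /\
      (forall a v, V v -> g (a * v) = a * g v) /\
      (forall v, V v -> X (g v - f v)).

Definition quasi_projective (V : A -> Prop) : Prop := M_projective V V.

Definition fqp_ring : Prop :=
  forall I, ideal I -> fg_ideal I -> quasi_projective I.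

Definition chain_ring : Prop :=
  forall I J, ideal I -> ideal J -> subset_pred I J \/ subset_pred J I.

Definition nilrad (x : A) : Prop := exists n : nat, x ^+ n = 0.

(* A/N is a valuation domain, written out in A:
   A/N is an integral domain (N prime; note N is proper since A is nontrivial)
   and for all a, b in A/N, a divides b or b divides a. *)
Definition quotient_nilrad_valuation_domain : Prop :=
  (forall a b, nilrad (a * b) -> nilrad a \/ nilrad b) /\
  (forall a b, exists c, nilrad (b - c * a) \/ nilrad (a - c * b)).

Definition nilrad_sq_zero : Prop :=
  forall x y, nilrad x -> nilrad y -> x * y = 0.

Definition nilrad_divisible : Prop :=
  forall r n, ~ nilrad r -> nilrad n -> exists m, nilrad m /\ n = r * m.

Definition nilrad_torsionfree : Prop :=
  forall r n, ~ nilrad r -> nilrad n -> r * n = 0 -> n = 0.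

End Defs.

(* If A is a chain ring, its finitely generated ideals are principal, and principal
   ideals are quasi-projective.  In the second case, a finitely generated ideal with a
   non-nilpotent generator is principal because N is divisible; an ideal generated by
   nilpotents lies in N, where N^2 = 0 and torsionfreeness allow dropping generators
   until they are independent modulo N, and then any map defined on the generators
   extends linearly.
   Conversely, in a local fqp-ring quasi-projectivity of Aa + Ab, applied to the maps
   r a + s b |-> r a and r a + s b |-> r b, shows that either a and b are comparable
   for divisibility or Aa and Ab meet in 0, and that in the latter case a <> 0 forces
   ann a <= ann b.  If A is not a chain ring it has an incomparable pair, and these two
   facts make incomparable elements square to zero and every non-nilpotent element
   divide every nilpotent one, from which the structure of A/N and N follows. *)

From Pilot Require Import Defs.
From mathcomp Require Import all_boot all_algebra.
From mathcomp Require Import boolp classical_sets.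
From mathcomp Require Import ring.
Set Implicit Arguments. Unset Strict Implicit. Unset Printing Implicit Defensive.
Import GRing.Theory.
Local Open Scope ring_scope.

Lemma choice_on (T U : Type) (P : T -> Prop) (Q : T -> U -> Prop) : U ->
  (forall t, P t -> exists u, Q t u) -> exists f : T -> U, forall t, P t -> Q t (f t).
Proof.
move=> u0 PQ.
suff [f Hf] : {f : T -> U & forall t, P t -> Q t (f t)} by exists f.
apply: (@choice _ _ (fun t u => P t -> Q t u)) => t.
by have [/PQ [u Qu]|nPt] := EM (P t); [exists u|exists u0].
Qed.

Lemma exists_max_index (T : Type) (R : T -> T -> Prop) :
  (forall x y, R x y \/ R y x) -> (forall x y z, R x y -> R y z -> R x z) ->
  forall n (r : 'I_n.+1 -> T), exists j, forall i, R (r i) (r j).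
Proof.
move=> Rtot Rtr; have Rr x : R x x by case: (Rtot x x).
elim=> [|n IH] r; first by exists ord0 => i; rewrite (ord1 i).
have [j Hj] := IH (fun i => r (lift ord0 i)).
case: (Rtot (r ord0) (r (lift ord0 j))) => H.
- by exists (lift ord0 j) => i; case: (unliftP ord0 i) => [i'|] ->.
- exists ord0 => i; case: (unliftP ord0 i) => [i'|] -> //.
  exact: Rtr (Hj i') H.
Qed.

Section Ideals.
Variable A : comNzRingType.
Implicit Types (I X : A -> Prop) (a b c p x y : A).

Lemma ideal0 I : ideal I -> I 0.
Proof. by case. Qed.

Lemma idealD I x y : ideal I -> I x -> I y -> I (x + y).
Proof. by move=> [_ [H _]]; apply: H. Qed.

Lemma idealM I a x : ideal I -> I x -> I (a * x).
Proof. by move=> [_ [_ H]]; apply: H. Qed.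

Lemma idealN I x : ideal I -> I x -> I (- x).
Proof. by move=> HI Ix; rewrite -mulN1r; apply: idealM. Qed.

Lemma idealI I J : ideal I -> ideal J -> ideal (fun z => I z /\ J z).
Proof.
move=> HI HJ; split; first by split; exact: ideal0.
by split=> [x y [Ix Jx] [Iy Jy]|a x [Ix Jx]]; split; apply: idealD || apply: idealM.
Qed.

Lemma ideal_sum I (T : Type) (r : seq T) (P : pred T) (F : T -> A) :
  ideal I -> (forall i, P i -> I (F i)) -> I (\sum_(i <- r | P i) F i).
Proof. by move=> HI; apply: big_ind; [exact: ideal0|move=> *; exact: idealD]. Qed.

Lemma map_sum_modX I X (f : A -> A) (T : Type) (r : seq T) (F a : T -> A) :
  ideal I -> ideal X ->
  (forall v w, I v -> I w -> X (f (v + w) - (f v + f w))) ->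
  (forall a v, I v -> X (f (a * v) - a * f v)) ->
  (forall t, I (F t)) ->
  X (f (\sum_(t <- r) a t * F t) - \sum_(t <- r) a t * f (F t)).
Proof.
move=> HI HX fadd flin IF; elim: r => [|t r IH].
  by rewrite !big_nil; have := flin 0 0 (ideal0 HI); rewrite !mul0r subr0.
rewrite !big_cons.
set S := \sum_(u <- r) a u * F u in IH *; set Sf := \sum_(u <- r) a u * f (F u) in IH *.
have IS : I S by rewrite /S; apply: ideal_sum => // u _; apply: idealM.
have Iat : I (a t * F t) by exact: (idealM _ HI).
have -> : f (a t * F t + S) - (a t * f (F t) + Sf) =
  (f (a t * F t + S) - (f (a t * F t) + f S)) + (f (a t * F t) - a t * f (F t))
  + (f S - Sf) by ring.
by apply: idealD => //; apply: idealD => //; [exact: fadd|exact: flin].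
Qed.

Definition multiple x y := exists c, x = c * y.

Lemma multiple_refl x : multiple x x.
Proof. by exists 1; rewrite mul1r. Qed.

Lemma multiple0 y : multiple 0 y.
Proof. by exists 0; rewrite mul0r. Qed.

Lemma multipleMl a x : multiple (a * x) x.
Proof. by exists a. Qed.

Lemma multiple_trans x y z : multiple x y -> multiple y z -> multiple x z.
Proof. by move=> [c ->] [d ->]; exists (c * d); rewrite mulrA. Qed.

Lemma ideal_multiple p : ideal (multiple ^~ p).
Proof.
split; [by exists 0; rewrite mul0r|split].
- by move=> y z [c ->] [d ->]; exists (c + d); rewrite mulrDl.
- by move=> a y [c ->]; exists (a * c); rewrite mulrA.
Qed.

Lemma quasi_projective_principal I p :
  ideal I -> (forall x, I x <-> multiple x p) -> quasi_projective I.
Proof.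
move=> HI Ip X HX _ f fI _ flin.
have [s Hs] := (Ip (f p)).1 (fI _ ((Ip p).2 (multiple_refl p))).
exists (fun v => s * v); split; [|split; [|split]].
- by move=> v Iv; apply: idealM.
- by move=> v w _ _; rewrite mulrDr.
- by move=> a v _; exact: mulrCA.
- move=> v /Ip [r ->].
  have := flin r p ((Ip p).2 (multiple_refl p)); rewrite Hs => H.
  have -> : s * (r * p) - f (r * p) = - (f (r * p) - r * (s * p)) by ring.
  exact: idealN.
Qed.

Definition span n (g : 'I_n -> A) x := exists c : 'I_n -> A, x = \sum_(i < n) c i * g i.

Lemma span_gen n (g : 'I_n -> A) j : span g (g j).
Proof.
exists (fun i => (i == j)%:R).
rewrite (bigD1 j) //= eqxx mul1r big1 ?addr0 // => i /negbTE ->; by rewrite mul0r.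
Qed.

Lemma span_sub I n (g : 'I_n -> A) :
  ideal I -> (forall i, I (g i)) -> forall x, span g x -> I x.
Proof. by move=> HI Ig x [c ->]; apply: ideal_sum => // i _; apply: idealM. Qed.

Lemma span_principal I n (g : 'I_n -> A) j :
  ideal I -> (forall x, I x <-> span g x) -> (forall i, multiple (g i) (g j)) ->
  forall x, I x <-> multiple x (g j).
Proof.
move=> HI Ig gj x; split => [/Ig|[r ->]]; first exact: span_sub (ideal_multiple _) gj x.
by apply: idealM => //; apply/Ig; exact: span_gen.
Qed.

Lemma fg_ideal_principal_of_total I :
  (forall x y, multiple x y \/ multiple y x) -> ideal I -> fg_ideal I ->
  exists p, forall x, I x <-> multiple x p.
Proof.
move=> tot HI [[|n] [g Ig]].
  exists 0 => x; rewrite Ig; split => [[c ->]|[r ->]].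
    by rewrite big_ord0; exists 0; rewrite mulr0.
  by exists (fun _ => 0); rewrite big_ord0 mulr0.
have [j gj] := exists_max_index tot (@multiple_trans) g.
by exists (g j); exact: span_principal Ig gj.
Qed.

Lemma multiple_total_of_chain :
  chain_ring A -> forall x y, multiple x y \/ multiple y x.
Proof.
move=> ch x y; case: (ch _ _ (ideal_multiple x) (ideal_multiple y)) => H.
- by left; apply: H; exact: multiple_refl.
- by right; apply: H; exact: multiple_refl.
Qed.

Lemma chain_of_multiple_total :
  (forall x y, multiple x y \/ multiple y x) -> chain_ring A.
Proof.
move=> tot I J HI HJ; apply: contrapT => /not_orP[/existsNP[x /not_implyP[Ix nJx]]].
move=> /existsNP[y /not_implyP[Jy nIy]].
case: (tot x y) => [[c Ec]|[c Ec]].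
- by apply: nJx; rewrite Ec; apply: idealM.
- by apply: nIy; rewrite Ec; apply: idealM.
Qed.

Lemma chain_fqp : chain_ring A -> fqp_ring A.
Proof.
move=> /multiple_total_of_chain tot I HI fgI.
have [p Ip] := fg_ideal_principal_of_total tot HI fgI.
exact: quasi_projective_principal HI Ip.
Qed.

End Ideals.

Section NilradicalSquareZero.
Variable A : comNzRingType.
Hypothesis nil_sq0 : nilrad_sq_zero A.

Lemma ideal_nilrad : ideal (@nilrad A).
Proof.
split; [by exists 1%N; rewrite expr1|split].
- move=> x y Nx Ny; exists 2%N.
  by rewrite expr2 mulrDl !mulrDr !nil_sq0 // !addr0.
- by move=> a x Nx; exists 2%N; rewrite expr2 mulrACA [x * x]nil_sq0 // mulr0.
Qed.

Lemma quasi_projective_nil_independent I n (h : 'I_n -> A) :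
  ideal I -> (forall x, I x <-> span h x) -> (forall i, nilrad (h i)) ->
  (forall c : 'I_n -> A, \sum_(i < n) c i * h i = 0 -> forall i, nilrad (c i)) ->
  quasi_projective I.
Proof.
move=> HI Ih hN hind X HX _ f fI fadd flin.
have IN x : I x -> nilrad x by move=> /Ih; exact: span_sub ideal_nilrad hN x.
have Ih_gen i : I (h i) by apply/Ih; exact: span_gen.
have [C HC] : exists C : A -> 'I_n -> A, forall v, I v -> v = \sum_(i < n) C v i * h i.
  exact: choice_on (fun _ => 0) (fun v Iv => (Ih v).1 Iv).
(* f (h i) lies in N and so is killed by the nilpotent coefficients of any relation *)
have welldef c d : \sum_(i < n) c i * h i = \sum_(i < n) d i * h i ->
    \sum_(i < n) c i * f (h i) = \sum_(i < n) d i * f (h i).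
  move=> E; apply/eqP; rewrite -subr_eq0 -sumrB; apply/eqP.
  have E' : \sum_(i < n) (c i - d i) * h i = 0.
    by under eq_bigr do rewrite mulrBl; rewrite sumrB E subrr.
  apply: big1 => i _; rewrite -mulrBl nil_sq0 //; first exact: hind E' i.
  exact: IN _ (fI _ (Ih_gen i)).
exists (fun v => \sum_(i < n) C v i * f (h i)); split; [|split; [|split]].
- by move=> v Iv; apply: ideal_sum => // i _; apply: idealM => //; exact: fI.
- move=> v w Iv Iw; rewrite -big_split /=.
  under [X in _ = X]eq_bigr do rewrite -mulrDl.
  apply: welldef; rewrite -HC; last exact: idealD.
  by under eq_bigr do rewrite mulrDl; rewrite big_split /= -!HC.
- move=> a v Iv; rewrite mulr_sumr; under [X in _ = X]eq_bigr do rewrite mulrA.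
  apply: welldef; rewrite -HC; last exact: idealM.
  by under eq_bigr do rewrite -mulrA; rewrite -mulr_sumr -HC.
- move=> v Iv; have := map_sum_modX (index_enum 'I_n) (C v) HI HX fadd flin Ih_gen.
  by rewrite -HC // => Xv; rewrite -opprB; exact: idealN.
Qed.

Lemma span_drop n (g e : 'I_n.+1 -> A) j :
  e j = 1 -> \sum_(i < n.+1) e i * g i = 0 ->
  forall x, span g x <-> span (fun i => g (lift j i)) x.
Proof.
move=> ej; rewrite (bigD1_ord j) //= ej mul1r => /eqP.
rewrite addr_eq0 => /eqP gj x; split => [[d ->]|[d ->]].
- exists (fun i => d (lift j i) - d j * e (lift j i)).
  rewrite (bigD1_ord j) //= gj mulrN mulr_sumr addrC -sumrB.
  by apply: eq_bigr => i _; ring.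
- exists (fun i => if unlift j i is Some i' then d i' else 0).
  rewrite (bigD1_ord j) //= unlift_none mul0r add0r.
  by apply: eq_bigr => i _; rewrite liftK.
Qed.

Definition multiple_modN (x y : A) := exists d, nilrad (x - d * y).

Lemma multiple_modN_trans x y z :
  multiple_modN x y -> multiple_modN y z -> multiple_modN x z.
Proof.
move=> [d Hd] [e He]; exists (d * e).
have -> : x - d * e * z = (x - d * y) + d * (y - e * z) by ring.
by apply: (idealD ideal_nilrad Hd); exact: (idealM _ ideal_nilrad He).
Qed.

Lemma nilrad_multiple_modN x y : multiple_modN x y -> nilrad y -> nilrad x.
Proof.
move=> [d Hd] Ny; have -> : x = (x - d * y) + d * y by ring.
by apply: (idealD ideal_nilrad Hd); exact: (idealM _ ideal_nilrad Ny).
Qed.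

Hypothesis val : quotient_nilrad_valuation_domain A.

Lemma multiple_modN_total x y : multiple_modN x y \/ multiple_modN y x.
Proof. by have [c [H|H]] := val.2 y x; [left|right]; exists c. Qed.

Hypothesis tf : nilrad_torsionfree A.

(* Divide the relation by a coefficient that divides all the others modulo N;
   torsionfreeness makes the quotient a relation again. *)
Lemma nil_relation_normalize n (g c : 'I_n.+1 -> A) k :
  (forall i, nilrad (g i)) -> \sum_(i < n.+1) c i * g i = 0 -> ~ nilrad (c k) ->
  exists j (e : 'I_n.+1 -> A), e j = 1 /\ \sum_(i < n.+1) e i * g i = 0.
Proof.
move=> gN c0 nck.
have [j cj] := exists_max_index multiple_modN_total multiple_modN_trans c.
have ncj : ~ nilrad (c j) by move/(nilrad_multiple_modN (cj k)).
have [E HE] := @choice _ _ (fun i d => nilrad (c i - d * c j)) cj.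
exists j, (fun i => if i == j then 1 else E i); split; first by rewrite eqxx.
have NI := ideal_nilrad.
apply: (tf ncj); first by apply: ideal_sum => // i _; apply: idealM.
rewrite -[RHS]c0 mulr_sumr; apply/eqP; rewrite -subr_eq0 -sumrB; apply/eqP.
apply: big1 => i _.
have [->|_] := eqVneq i j; first by rewrite mul1r subrr.
have -> : c j * (E i * g i) - c i * g i = - ((c i - E i * c j) * g i) by ring.
by rewrite nil_sq0 ?oppr0.
Qed.

Lemma quasi_projective_nil_generated n (g : 'I_n -> A) I :
  ideal I -> (forall x, I x <-> span g x) -> (forall i, nilrad (g i)) ->
  quasi_projective I.
Proof.
elim: n g I => [|n IH] g I HI Ig gN.
  by apply: (quasi_projective_nil_independent HI Ig gN) => c _ [].
have [ind|/existsNP[c /not_implyP[c0 /existsNP[k nck]]]] := EM (forall c : 'I_n.+1 -> A,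
    \sum_(i < n.+1) c i * g i = 0 -> forall i, nilrad (c i)).
  exact: quasi_projective_nil_independent HI Ig gN ind.
have [j [e [ej e0]]] := nil_relation_normalize gN c0 nck.
apply: (IH (fun i => g (lift j i)) I HI) => [x|i]; last exact: gN.
by rewrite Ig; exact: span_drop ej e0 x.
Qed.

Hypothesis div : nilrad_divisible A.

Lemma valuation_fqp : fqp_ring A.
Proof.
move=> I HI [n [g Ig]].
have [gN|/existsNP[k nk]] := EM (forall i, nilrad (g i)).
  exact: quasi_projective_nil_generated HI Ig gN.
revert k nk; case: n g Ig => [|n] g Ig k nk; first by move: (ltn_ord k).
have [j gj] := exists_max_index multiple_modN_total multiple_modN_trans g.
have ngj : ~ nilrad (g j) by move/(nilrad_multiple_modN (gj k)).
apply: (quasi_projective_principal HI (span_principal HI Ig _)) => i.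
have [d Hd] := gj i; have [m [_ Em]] := div ngj Hd.
exists (d + m); have -> : g i = (g i - d * g j) + d * g j by ring.
by rewrite Em; ring.
Qed.

End NilradicalSquareZero.

Section LocalRing.
Variable A : comNzRingType.
Local Open Scope classical_set_scope.
Local Open Scope ring_scope.

Definition invertible (x : A) := exists y, y * x = 1.

Lemma proper_ideal_bigcup (F : set (set A)) J0 :
  F J0 -> Defs.proper_ideal J0 -> (forall J z, F J -> J z -> Defs.proper_ideal J) ->
  total_on F subset -> Defs.proper_ideal (\bigcup_(J in F) J).
Proof.
move=> FJ0 [[J00 _] _] FP Ftot; split; [split; [|split]|].
- by exists J0.
- move=> y w [J1 FJ1 J1y] [J2 FJ2 J2w].
  have [[_ [J1D _]] _] := FP _ _ FJ1 J1y; have [[_ [J2D _]] _] := FP _ _ FJ2 J2w.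
  case: (Ftot _ _ FJ1 FJ2) => [s12|s21].
  + by exists J2 => //; apply: J2D => //; apply: s12.
  + by exists J1 => //; apply: J1D => //; apply: s21.
- move=> a y [J1 FJ1 J1y]; have [[_ [_ J1M]] _] := FP _ _ FJ1 J1y.
  by exists J1 => //; apply: J1M.
- by move=> [J1 FJ1 J11]; have [_ n1] := FP _ _ FJ1 J11; exact: n1.
Qed.

Lemma nonunit_maximal_ideal x : ~ invertible x -> exists M, maximal_ideal M /\ M x.
Proof.
move=> nux.
(* the empty set is added so that the empty chain has an upper bound *)
pose P (J : set A) := J = set0 \/ (Defs.proper_ideal J /\ J x).
have Px : P (fun z => multiple z x).
  right; split; last exact: multiple_refl.
  by split; [exact: ideal_multiple|move=> [c /esym c1]; apply: nux; exists c].
have [F FP Ftot|J [PJ Jmax]] := @Zorn_bigcup _ P.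
  have FPJ J z : F J -> J z -> Defs.proper_ideal J /\ J x.
    by move=> FJ Jz; case: (FP J FJ) => // J_0; rewrite J_0 in Jz.
  have [[J0 FJ0 J0x]|Fx] := EM ((\bigcup_(J in F) J) x).
    right; split; last by exists J0.
    apply: (proper_ideal_bigcup FJ0 (FPJ _ _ FJ0 J0x).1) => // J z FJ Jz.
    exact: (FPJ _ _ FJ Jz).1.
  left; apply/seteqP; split => // z [J FJ Jz].
  by apply: Fx; exists J => //; exact: (FPJ _ _ FJ Jz).2.
case: PJ => [J_0|[PrJ Jx]].
  by exfalso; move: Px; apply: Jmax; rewrite J_0; split => // /(_ 0 (multiple0 x)).
exists J; split => //; split => // K PK JK z Kz.
apply: contrapT => nJz; apply: (Jmax K); last by right; split => //; apply: JK.
by split => // KJ; apply: nJz; apply: KJ.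
Qed.

Lemma local_invertible_or_1sub :
  local_ring A -> forall x, invertible x \/ invertible (1 - x).
Proof.
move=> [M [[[HM M1] _] Muniq]].
have nonunitM x : ~ invertible x -> M x.
  by move=> /nonunit_maximal_ideal [M' [maxM' M'x]]; apply/(Muniq M' maxM').
move=> x; apply: contrapT => /not_orP [/nonunitM Mx /nonunitM M1x].
by apply: M1; have := idealD HM Mx M1x; rewrite addrC subrK.
Qed.

Hypothesis local : forall x : A, invertible x \/ invertible (1 - x).

Lemma nonunitD x y : ~ invertible x -> ~ invertible y -> ~ invertible (x + y).
Proof.
move=> nx ny [z zxy]; case: (local (z * x)) => [[w Hw]|[w Hw]].
- by apply: nx; exists (w * z); rewrite -mulrA.
- apply: ny; exists (w * z); rewrite -mulrA.
  by have -> : z * y = 1 - z * x by rewrite -zxy; ring.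
Qed.

End LocalRing.

Section TwoGenerated.
Variable A : comNzRingType.
Implicit Types (a b c d k r s t u v x y : A) (g : A -> A).

Definition sum2 a b x := exists r s, x = r * a + s * b.

Lemma ideal_sum2 a b : ideal (sum2 a b).
Proof.
split; [by exists 0, 0; rewrite !mul0r addr0|split].
- by move=> x y [r [s ->]] [r' [s' ->]]; exists (r + r'), (s + s'); ring.
- by move=> c x [r [s ->]]; exists (c * r), (c * s); ring.
Qed.

Lemma fg_sum2 a b : fg_ideal (sum2 a b).
Proof.
exists 2%N, (fun i : 'I_2 => if val i == 0%N then a else b) => x; split.
- move=> [r [s ->]]; exists (fun i : 'I_2 => if val i == 0%N then r else s).
  by rewrite !big_ord_recl big_ord0 /= addr0.
- move=> [c ->]; exists (c ord0), (c (lift ord0 ord0)).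
  by rewrite !big_ord_recl big_ord0 /= addr0.
Qed.

Lemma sum2_multiplel a b x : multiple x a -> sum2 a b x.
Proof. by move=> [r ->]; exists r, 0; rewrite mul0r addr0. Qed.

Lemma sum2_multipler a b x : multiple x b -> sum2 a b x.
Proof. by move=> [s ->]; exists 0, s; rewrite mul0r add0r. Qed.

Lemma sum2l a b : sum2 a b a.
Proof. by apply: sum2_multiplel; exact: multiple_refl. Qed.

Lemma sum2r a b : sum2 a b b.
Proof. by apply: sum2_multipler; exact: multiple_refl. Qed.

Definition linear_on (V : A -> Prop) g :=
  (forall v w, V v -> V w -> g (v + w) = g v + g w) /\
  (forall c v, V v -> g (c * v) = c * g v).

Lemma linear_on0 (V : A -> Prop) g v : linear_on V g -> V v -> g 0 = 0.
Proof. by move=> [_ glin] Vv; have := glin 0 v Vv; rewrite !mul0r. Qed.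

Lemma multiple_coef_sub a b r s r' s' :
  r * a + s * b = r' * a + s' * b -> multiple ((r - r') * a) b.
Proof.
move=> E; exists (s' - s); apply/eqP; rewrite -subr_eq0; apply/eqP.
by transitivity ((r * a + s * b) - (r' * a + s' * b)); [ring|rewrite E subrr].
Qed.

(* The lift of [r a + s b |-> r t]: this map is well defined modulo [X] because
   two decompositions of the same element differ by an [r] with [r a] in [Ab]. *)
Lemma quasi_projective_sum2_lift a b t (X : A -> Prop) :
  quasi_projective (sum2 a b) -> ideal X -> subset_pred X (sum2 a b) -> sum2 a b t ->
  (forall r, multiple (r * a) b -> X (r * t)) ->
  exists g, linear_on (sum2 a b) g /\ X (g a - t) /\ X (g b).
Proof.
move=> qp HX Xsub It Xt.
have I2 := ideal_sum2 a b.
have [R HR] : exists R : A -> A, forall v, sum2 a b v -> exists s, v = R v * a + s * b.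
  apply: (@choice_on _ _ _ (fun v r => exists s, v = r * a + s * b) 0).
  by move=> v [r [s Ev]]; exists r, s.
have coef v r s : sum2 a b v -> v = r * a + s * b -> X ((R v - r) * t).
  move=> Iv Ev; have [s' Ev'] := HR v Iv; apply: Xt.
  by apply: (@multiple_coef_sub _ _ _ s' _ s); rewrite -Ev -Ev'.
have fadd v w : sum2 a b v -> sum2 a b w ->
    X (R (v + w) * t - (R v * t + R w * t)).
  move=> Iv Iw; have [s1 E1] := HR v Iv; have [s2 E2] := HR w Iw.
  have -> : R (v + w) * t - (R v * t + R w * t) = (R (v + w) - (R v + R w)) * t by ring.
  by apply: (coef _ _ (s1 + s2)); [exact: idealD|rewrite {1}E1 {1}E2; ring].
have flin c v : sum2 a b v -> X (R (c * v) * t - c * (R v * t)).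
  move=> Iv; have [s1 E1] := HR v Iv.
  have -> : R (c * v) * t - c * (R v * t) = (R (c * v) - c * R v) * t by ring.
  by apply: (coef _ _ (c * s1)); [exact: idealM|rewrite {1}E1; ring].
have [g [_ [gadd [glin gX]]]] :=
  qp X HX Xsub (fun v => R v * t) (fun v _ => idealM _ I2 It) fadd flin.
exists g; split; first by split.
have -> : g a - t = (g a - R a * t) + (R a - 1) * t by ring.
have -> : g b = (g b - R b * t) + (R b - 0) * t by ring.
have Ia := sum2l a b; have Ib := sum2r a b.
split; apply: idealD => //; [exact: gX|apply: (coef _ _ 0) => //; ring|
  exact: gX|apply: (coef _ _ 1) => //; ring].
Qed.

Lemma linear_on_sum2_relation a b g k d r s :
  linear_on (sum2 a b) g -> g a = k * a -> g b = d * b ->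
  r * a + s * b = 0 -> s * (d - k) * b = 0.
Proof.
move=> glin ga gb rs0.
have Ia := sum2l a b; have Ib := sum2r a b; have I2 := ideal_sum2 a b.
have : g (r * a + s * b) = r * (k * a) + s * (d * b).
  by rewrite glin.1 ?glin.2 -?ga -?gb //; apply: idealM.
rewrite rs0 (linear_on0 glin Ia) => E.
have -> : s * (d - k) * b = (r * (k * a) + s * (d * b)) - k * (r * a + s * b) by ring.
by rewrite -E rs0 mulr0 subr0.
Qed.

Definition disjoint_multiples a b := forall z, multiple z a -> multiple z b -> z = 0.

Hypothesis local : forall x : A, invertible x \/ invertible (1 - x).
Hypothesis fqp : fqp_ring A.

Lemma fqp_trichotomy a b : multiple a b \/ multiple b a \/ disjoint_multiples a b.
Proof.
have HX := idealI (ideal_multiple a) (ideal_multiple b).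
have [g [glin [[[k0 Ek] [c Ec]] [[d0 Ed0] [d Ed]]]]] :=
  quasi_projective_sum2_lift (fqp (ideal_sum2 a b) (fg_sum2 a b)) HX
    (fun z za => sum2_multiplel b za.1)
    (sum2l a b) (fun r rab => conj (multipleMl r a) rab).
(* [g a = k a], [g b = d b]; unless [1 - k] or [d] is a unit, [k - d] is one, and it
   kills [Aa :&: Ab] *)
pose k := 1 + k0.
have ga : g a = k * a by rewrite mulrDl mul1r -Ek; ring.
have rel := linear_on_sum2_relation glin ga Ed.
have [[y Hy]|n1k] := EM (invertible (1 - k)).
  left; exists (- (y * c)); rewrite -[a]mul1r -Hy.
  have -> : y * (1 - k) * a = - y * (g a - a) by rewrite ga; ring.
  by rewrite Ec; ring.
have [[y Hy]|nd] := EM (invertible d).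
  by right; left; exists (y * d0); rewrite -[b]mul1r -Hy -mulrA -Ed Ed0 mulrA.
right; right => z [r Er] [s Es].
have [[y Hy]|[y Hy]] := local (1 - k + d).
  by case: (nonunitD local n1k nd); exists y.
have := rel (- r) s; rewrite mulNr -Er Es addNr => /(_ erefl) sdk.
rewrite -[s * b]mul1r -Hy.
have -> : y * (1 - (1 - k + d)) * (s * b) = - (y * (s * (d - k) * b)) by ring.
by rewrite sdk mulr0 oppr0.
Qed.

Lemma fqp_ann_disjoint u v : disjoint_multiples u v -> u <> 0 ->
  forall c, c * u = 0 -> c * v = 0.
Proof.
move=> uv u0 c cu.
pose X z := exists al, al * u = 0 /\ z = al * v.
have HX : ideal X.
  split; [by exists 0; rewrite !mul0r|split].
  - by move=> x y [a1 [H1 ->]] [a2 [H2 ->]]; exists (a1 + a2); rewrite !mulrDl H1 H2 addr0.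
  - by move=> a x [a1 [H1 ->]]; exists (a * a1); rewrite -!mulrA H1 mulr0.
have Xsub : subset_pred X (sum2 u v).
  by move=> z [al [_ ->]]; apply: sum2_multipler; exact: multipleMl.
have [g [glin [[al [alu Eal]] _]]] :=
  quasi_projective_sum2_lift (fqp (ideal_sum2 u v) (fg_sum2 u v)) HX Xsub
    (sum2r u v)
    (fun r ruv => ex_intro _ r (conj (uv _ (multipleMl r u) ruv) erefl)).
have gu : g u = (1 + al) * v by rewrite mulrDl mul1r -Eal; ring.
case: (local (1 + al)) => [[y Hy]|[y Hy]].
- rewrite -[v]mul1r -Hy.
  have -> : c * (y * (1 + al) * v) = y * (c * g u) by rewrite gu; ring.
  have Iu := sum2l u v.
  by rewrite -glin.2 // cu (linear_on0 glin Iu) mulr0.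
- case: u0; rewrite -[u]mul1r -Hy.
  have -> : y * (1 - (1 + al)) * u = - (y * (al * u)) by ring.
  by rewrite alu mulr0 oppr0.
Qed.

End TwoGenerated.

Section NonChain.
Variable A : comNzRingType.
Implicit Types (a b c n w x y : A).

Lemma nilrad0 : nilrad (0 : A).
Proof. by exists 1%N; rewrite expr1. Qed.

Lemma nilrad_sqr0 x : x * x = 0 -> nilrad x.
Proof. by exists 2%N; rewrite expr2. Qed.

Lemma nilrad_multiple x y : multiple x y -> nilrad y -> nilrad x.
Proof. by move=> [c ->] [k yk]; exists k; rewrite exprMn yk mulr0. Qed.

Definition incomparable a b := ~ multiple a b /\ ~ multiple b a.

Lemma incomparable_sym a b : incomparable a b -> incomparable b a.
Proof. by case. Qed.

Lemma multiple_cases a b : multiple a b \/ multiple b a \/ incomparable a b.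
Proof.
have [ab|nab] := EM (multiple a b); first by left.
by have [ba|nba] := EM (multiple b a); [right; left|right; right].
Qed.

Lemma not_chain_incomparable : ~ chain_ring A -> exists a b, incomparable a b.
Proof.
move=> nch; apply: contrapT => /forallNP none; apply/nch/chain_of_multiple_total => x y.
case: (multiple_cases x y) => [|[|xy]]; [left|right|] => //.
by case: (none x); exists y.
Qed.

Hypothesis local : forall x : A, invertible x \/ invertible (1 - x).
Hypothesis trichotomy :
  forall a b : A, multiple a b \/ multiple b a \/ disjoint_multiples a b.
Hypothesis ann_disjoint : forall a b : A, disjoint_multiples a b -> a <> 0 ->
  forall c, c * a = 0 -> c * b = 0.

Lemma incomparable_disjoint a b : incomparable a b -> disjoint_multiples a b.
Proof. by move=> [nab nba]; case: (trichotomy a b) => [|[]]. Qed.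

Lemma incomparable_neq0 a b : incomparable a b -> a <> 0.
Proof. by move=> [nab _] a0; apply: nab; rewrite a0; exact: multiple0. Qed.

Lemma incomparable_mul0 a b : incomparable a b -> a * b = 0.
Proof.
by move/incomparable_disjoint; apply; [rewrite mulrC|]; exact: multipleMl.
Qed.

Lemma incomparable_addr a b : incomparable a b -> incomparable a (a + b).
Proof.
move=> ab; split => [[r Er]|[c Ec]].
- have E : (1 - r) * a = r * b by rewrite mulrBl mul1r {1}Er; ring.
  have E0 : (1 - r) * a = 0.
    by apply: (incomparable_disjoint ab); [|rewrite E]; exact: multipleMl.
  case: (local r) => [[y Hy]|[y Hy]].
  + apply: (incomparable_neq0 (incomparable_sym ab)).
    by rewrite -[b]mul1r -Hy -mulrA -E E0 mulr0.
  + by apply: (incomparable_neq0 ab); rewrite -[a]mul1r -Hy -mulrA E0 mulr0.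
- apply: ab.2; exists (c - 1).
  by rewrite mulrBl -Ec mul1r addrC addKr.
Qed.

Lemma incomparable_sqr0 a b : incomparable a b -> a * a = 0.
Proof.
move=> ab; have := incomparable_mul0 (incomparable_addr ab).
by rewrite mulrDr (incomparable_mul0 ab) addr0.
Qed.

Lemma nilrad_incomparable a b : incomparable a b -> nilrad a.
Proof. by move/incomparable_sqr0/nilrad_sqr0. Qed.

Lemma nilrad_multiple_nonnil x n : ~ nilrad x -> nilrad n -> multiple n x.
Proof.
move=> nx Nn.
case: (multiple_cases n x) => [//|[xn|/incomparable_sym/nilrad_incomparable //]].
by case: nx; exact: nilrad_multiple xn Nn.
Qed.

Lemma comparable_nonnil x y : ~ nilrad x -> multiple x y \/ multiple y x.
Proof.
by move=> nx; case: (multiple_cases x y) => [|[|/nilrad_incomparable]]; [left|right|].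
Qed.

Lemma mul_nonnil_incomparable_neq0 a b x : incomparable a b -> ~ nilrad x -> x * a <> 0.
Proof.
move=> ab nx xa.
have [a1 Ea] := nilrad_multiple_nonnil nx (nilrad_incomparable ab).
case: (multiple_cases a1 b) => [[c Ec]|[[c Ec]|a1b]].
- by apply: ab.1; exists (c * x); rewrite Ea Ec; ring.
- have ncx : ~ multiple c x.
    by move=> [e Ee]; apply: ab.2; exists e; rewrite Ec Ee Ea; ring.
  have [Nc|nc] := EM (nilrad c); first exact/ncx/nilrad_multiple_nonnil.
  case: (comparable_nonnil x nc) => [/ncx []|[e Ee]].
  by apply: ab.1; exists e; rewrite Ea Ee Ec; ring.
- have xb := ann_disjoint (incomparable_disjoint ab) (incomparable_neq0 ab) xa.
  have ba1 := incomparable_sym a1b.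
  have xa1 := ann_disjoint (incomparable_disjoint ba1) (incomparable_neq0 ba1) xb.
  by apply: (incomparable_neq0 ab); rewrite Ea mulrC xa1.
Qed.

Lemma incomparable_divide n a b : n <> 0 -> (forall w, multiple n w \/ multiple w n) ->
  incomparable a b -> exists a' b', incomparable a' b' /\ a = a' * n /\ b = b' * n.
Proof.
move=> n0 cmp ab.
case: (cmp a) => [[ha Ea]|[a' Ea]]; case: (cmp b) => [[hb Eb]|[b' Eb]].
- by case: n0; apply: (incomparable_disjoint ab); [exists ha|exists hb].
- by case: ab.2; exists (b' * ha); rewrite Eb Ea mulrA.
- by case: ab.1; exists (a' * hb); rewrite Ea Eb mulrA.
exists a', b'; split => //; split=> [[c Ec]|[c Ec]].
- by apply: ab.1; exists c; rewrite Ea Eb Ec mulrA.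
- by apply: ab.2; exists c; rewrite Ea Eb Ec mulrA.
Qed.

Variables u v : A.
Hypothesis uv : incomparable u v.

Lemma nilrad_torsionfree_of_incomparable : nilrad_torsionfree A.
Proof.
move=> x n nx Nn xn; apply: contrapT => n0.
case: (multiple_cases n u) => [nu|[[c Ec]|inu]]; first last.
- exact: mul_nonnil_incomparable_neq0 inu nx xn.
- by apply: (mul_nonnil_incomparable_neq0 uv nx); rewrite Ec mulrCA xn mulr0.
case: (multiple_cases n v) => [nv|[[c Ec]|inv]]; first last.
- exact: mul_nonnil_incomparable_neq0 inv nx xn.
- apply: (mul_nonnil_incomparable_neq0 (incomparable_sym uv) nx).
  by rewrite Ec mulrCA xn mulr0.
exact/n0/(incomparable_disjoint uv).
Qed.

Lemma nilrad_sqr0_of_incomparable n : nilrad n -> n * n = 0.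
Proof.
move=> Nn; have [->|n0] := EM (n = 0); first by rewrite mul0r.
have [[w nw]|/forallNP ncmp] := EM (exists w, incomparable n w).
  exact: incomparable_sqr0 nw.
have cmp w : multiple n w \/ multiple w n.
  by case: (multiple_cases n w) => [|[|/ncmp]]; [left|right|].
(* [n] divides every incomparable pair, so [u] is divisible by every power of [n] *)
have pow k : exists a b, incomparable a b /\ u = a * n ^+ k.
  elim: k => [|k [a [b [ab ->]]]]; first by exists u, v; rewrite expr0 mulr1.
  have [a' [b' [ab' [-> _]]]] := incomparable_divide n0 cmp ab.
  by exists a', b'; rewrite exprS mulrA.
have [K nK] := Nn; have [a [b [_ Eu]]] := pow K.
by case: (incomparable_neq0 uv); rewrite Eu nK mulr0.
Qed.

Lemma nilrad_sq_zero_of_incomparable : nilrad_sq_zero A.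
Proof.
have sqr0 := nilrad_sqr0_of_incomparable.
move=> n m Nn Nm; case: (multiple_cases n m) => [[c ->]|[[c ->]|/incomparable_mul0 //]].
- by rewrite -mulrA sqr0 // mulr0.
- by rewrite mulrCA sqr0 // mulr0.
Qed.

Lemma nilrad_prime_of_incomparable a b : nilrad (a * b) -> nilrad a \/ nilrad b.
Proof.
move=> Nab; apply: contrapT => /not_orP [na nb].
have tf := nilrad_torsionfree_of_incomparable.
have Nu := nilrad_incomparable uv.
have Nbu : nilrad (b * u).
  by apply: nilrad_sqr0; rewrite mulrACA [u * u]nilrad_sqr0_of_incomparable // mulr0.
have abu : a * (b * u) = 0 by rewrite mulrA nilrad_sq_zero_of_incomparable.
exact: incomparable_neq0 uv (tf _ _ nb Nu (tf _ _ na Nbu abu)).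
Qed.

Lemma nilrad_structure_of_incomparable :
  quotient_nilrad_valuation_domain A /\ nilrad_sq_zero A /\
  nilrad_divisible A /\ nilrad_torsionfree A.
Proof.
have prime := nilrad_prime_of_incomparable.
split; [split => // a b|split; [exact: nilrad_sq_zero_of_incomparable|split]].
- case: (multiple_cases b a) => [[c ->]|[[c ->]|ba]].
  + by exists c; left; rewrite subrr; exact: nilrad0.
  + by exists c; right; rewrite subrr; exact: nilrad0.
  + by exists 0; left; rewrite mul0r subr0; exact: nilrad_incomparable ba.
- move=> r n nr Nn; have [c Ec] := nilrad_multiple_nonnil nr Nn.
  exists c; split; last by rewrite Ec mulrC.
  by have := prime c r; rewrite -Ec => /(_ Nn) [|/nr].
- exact: nilrad_torsionfree_of_incomparable.
Qed.

End NonChain.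

Theorem theorem4p1 (A : comNzRingType) :
  local_ring A ->
  (fqp_ring A <->
   (chain_ring A \/
    (quotient_nilrad_valuation_domain A /\ nilrad_sq_zero A /\
     nilrad_divisible A /\ nilrad_torsionfree A))).
Proof.
move=> /local_invertible_or_1sub local; split.
- move=> fqp; have [|/not_chain_incomparable [u [v uv]]] := EM (chain_ring A).
    by left.
  right; apply: (nilrad_structure_of_incomparable local _ _ uv).
  + exact: fqp_trichotomy local fqp.
  + exact: fqp_ann_disjoint local fqp.
- case=> [|[val [sq0 [div tf]]]]; first exact: chain_fqp.
  exact: valuation_fqp sq0 val tf div.
Qed.
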